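(* Let $k$ be a field, $G$ an ordered abelian group, and $\mathcal{M}$ the valuation ideal of the power series field $k((G))$ with its canonical valuation. Let $f(X)=\sum_{i\ge1}c_iX^i\in k[[X]]$ with $c_1\neq0$, and let $f:\mathcal{M}\to\mathcal{M}$ be the induced map $y\mapsto\sum_{i\ge1}c_iy^i$. Then $f$ is an isomorphism of ultrametric spaces from $\mathcal{M}$ onto $\mathcal{M}$.
   Context: $k((G))$ consists of formal sums $a=\sum_{g\in G}c_gt^g$, $c_g\in k$, with well ordered support $\{g:c_g\ne0\}$; the canonical valuation is $va=\min\operatorname{supp}(a)$, $v0=\infty$, and $\mathcal{M}=\{a: va>0\}$. For $y\in\mathcal{M}$ the series $\sum_i c_iy^i$ converges to a well-defined element of $\mathcal{M}$. $\mathcal{M}$ is an ultrametric space with $u(a,b)=v(a-b)$. A map $g$ between ultrametric spaces is an isomorphism of ultrametric spaces if it is bijective and there is a strictly increasing map $\varphi$ between the value sets with $u'(gy,gz)=\varphi(u(y,z))$ for all $y\neq z$. *)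

From HB Require Import structures.
From mathcomp Require Import all_boot all_order all_algebra.
From mathcomp Require Import boolp classical_sets functions fsbigop.
Set Implicit Arguments. Unset Strict Implicit. Unset Printing Implicit Defensive.
Import Order.TTheory GRing.Theory Num.Theory.
Local Open Scope classical_set_scope.
Local Open Scope ring_scope.

Record ordered_abelian_group (G : zmodType) (le : G -> G -> Prop) : Prop := {
  oag_refl  : forall x, le x x;
  oag_anti  : forall x y, le x y -> le y x -> x = y;
  oag_trans : forall x y z, le x y -> le y z -> le x z;
  oag_total : forall x y, le x y \/ le y x;
  oag_add   : forall x y z, le x y -> le (x + z) (y + z) }.

Definition ltG (G : zmodType) (le : G -> G -> Prop) (x y : G) : Prop :=
  le x y /\ x <> y.

Section Hahn.
Variables (k : fieldType) (G : zmodType) (le : G -> G -> Prop).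

(* support of a formal sum a = sum_g a(g) t^g *)
Definition supp (a : G -> k) : set G := [set g | a g != 0].

Definition well_ordered (A : set G) : Prop :=
  forall B, B `<=` A -> B !=set0 -> exists2 m, B m & forall b, B b -> le m b.

Definition hahn : set (G -> k) := [set a | well_ordered (supp a)].

Definition hsub (a b : G -> k) : G -> k := fun g => a g - b g.

(* Cauchy product (the sum is finite for Hahn series) *)
Definition hmul (a b : G -> k) : G -> k :=
  fun g => \sum_(h \in [set: G]) (a h * b (g - h)).

Definition hone : G -> k := fun g => if g == 0 then 1 else 0.

Fixpoint hpow (a : G -> k) (n : nat) : G -> k :=
  match n with 0 => hone | n'.+1 => hmul a (hpow a n') end.

Definition is_val (a : G -> k) (g : G) : Prop :=
  a g != 0 /\ forall h, a h != 0 -> le g h.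
Definition hval (a : G -> k) : G := xget 0 (is_val a).

(* valuation ideal M = {a : v a > 0} (v 0 = oo > 0) *)
Definition valM : set (G -> k) :=
  [set a | hahn a /\ forall g, a g != 0 -> ltG le 0 g].

(* y |-> sum_{i>=1} c_i y^i  (the sum is finite coefficientwise for y in M) *)
Definition psmap (c : nat -> k) (y : G -> k) : G -> k :=
  fun g => \sum_(i \in [set i : nat | (1 <= i)%N]) (c i * hpow y i g).

Definition valueset : set G :=
  [set s | exists y z, [/\ valM y, valM z, y <> z & s = hval (hsub y z)]].

Definition ultrametric_iso (f : (G -> k) -> (G -> k)) : Prop :=
  set_bij valM valM f /\
  exists phi : G -> G,
    [/\ phi @` valueset `<=` valueset,
        (forall s t, valueset s -> valueset t -> ltG le s t -> ltG le (phi s) (phi t))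
      & forall y z, valM y -> valM z -> y <> z ->
          hval (hsub (f y) (f z)) = phi (hval (hsub y z))].
End Hahn.

From Pilot Require Import Defs.
From mathcomp Require Import all_boot all_algebra.
From mathcomp Require Import boolp classical_sets functions fsbigop.
Set Implicit Arguments. Unset Strict Implicit. Unset Printing Implicit Defensive.
Import GRing.Theory.
Local Open Scope classical_set_scope.
Local Open Scope ring_scope.

(* For y in M, the powers y^i are supported in the sums of i elements of the
   (positive) support of y.  By Neumann's lemma these sums form a well-ordered
   set in which each element has representations of only boundedly many
   lengths, so f(y) is coefficientwise a finite sum, lies in M, and its
   coefficient at g is c_1 y_g plus terms depending only on the coefficients
   of y strictly below g.  Consequently, if y and z first differ at m then
   f(y) and f(z) first differ at m: f preserves the valuation of differences
   (phi = id).  Conversely f(y) = z is solved coefficient by coefficient by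
   well-founded recursion over the semigroup generated by supp z, which is
   well-ordered by Neumann's lemma again. *)

Section OrderedGroup.
Variables (G : zmodType) (le : G -> G -> Prop).
Hypothesis HG : ordered_abelian_group le.
Local Notation lt := (ltG le).

Lemma ltG_nle x y : lt x y -> ~ le y x.
Proof. by move=> [xy nxy] yx; apply: nxy; apply: (oag_anti HG). Qed.

Lemma nleG_ltG x y : ~ le x y -> lt y x.
Proof.
move=> nxy; have [yx|//] := oag_total HG y x.
by split=> // e; apply: nxy; rewrite e; apply: (oag_refl HG).
Qed.

Lemma ltG_leG_trans x y z : lt x y -> le y z -> lt x z.
Proof.
move=> [xy nxy] yz; split; first exact: (oag_trans HG xy yz).
by move=> e; apply: nxy; apply: (oag_anti HG) => //; rewrite e.
Qed.

Lemma leG_ltG_trans x y z : le x y -> lt y z -> lt x z.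
Proof.
move=> xy [yz nyz]; split; first exact: (oag_trans HG xy yz).
by move=> e; apply: nyz; apply: (oag_anti HG) => //; rewrite -e.
Qed.

Lemma leGD2r x y z : le x y -> le (x + z) (y + z).
Proof. exact: oag_add. Qed.

Lemma leGD2l x y z : le x y -> le (z + x) (z + y).
Proof. by rewrite ![z + _]addrC; apply: leGD2r. Qed.

Lemma leGD2lK x y z : le (z + x) (z + y) -> le x y.
Proof. by move=> /(leGD2l (- z)); rewrite !addKr. Qed.

Lemma ltGD2r x y z : lt x y -> lt (x + z) (y + z).
Proof. by move=> [xy nxy]; split; [apply: leGD2r | move/addIr]. Qed.

Lemma ltGD2lK x y z : lt (z + x) (z + y) -> lt x y.
Proof.
by move=> [xy nxy]; split; [apply: leGD2lK xy | move=> e; apply: nxy; rewrite e].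
Qed.

Lemma ltGDl x y : lt 0 x -> lt y (x + y).
Proof. by move=> /(ltGD2r y); rewrite add0r. Qed.

Lemma ltG0D x y : lt 0 x -> lt 0 y -> lt 0 (x + y).
Proof. by move=> x0 y0; apply: ltG_leG_trans x0 _; rewrite addrC; case: (ltGDl x y0). Qed.

Lemma ltG_irr x : ~ lt x x.
Proof. by case. Qed.

End OrderedGroup.

Section WellOrdered.
Variables (G : zmodType) (le : G -> G -> Prop).
Hypothesis HG : ordered_abelian_group le.
Local Notation lt := (ltG le).

Lemma wo_sub (A B : set G) : A `<=` B -> well_ordered le B -> well_ordered le A.
Proof. by move=> AB WB C CA; apply: WB; apply: subset_trans AB. Qed.

Lemma wo_setU (A B : set G) :
  well_ordered le A -> well_ordered le B -> well_ordered le (A `|` B).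
Proof.
move=> WA WB C CAB C0.
have least_in (D : set G) : well_ordered le D -> (C `&` D) !=set0 ->
    exists2 m, C m & forall x, C x -> D x -> le m x.
  by move=> WD /(WD _ (@subIsetr _ C D)) [m [Cm _] mmin]; exists m => // x *; apply: mmin.
have [CA|nCA] := pselect ((C `&` A) !=set0); last first.
  have [|m Cm mmin] := least_in B WB.
    by case: C0 => x Cx; exists x; split=> //; case: (CAB x Cx) => // Ax; case: nCA; exists x.
  by exists m => // x Cx; case: (CAB x Cx) => [Ax|]; [case: nCA; exists x|apply: mmin].
have [ma Cma mina] := least_in A WA CA.
have [CB|nCB] := pselect ((C `&` B) !=set0); last first.
  by exists ma => // x Cx; case: (CAB x Cx) => [|Bx]; [apply: mina|case: nCB; exists x].
have [mb Cmb minb] := least_in B WB CB.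
have [ab|ba] := oag_total HG ma mb.
  exists ma => // x Cx; case: (CAB x Cx) => [|Bx]; first exact: mina.
  exact: (oag_trans HG ab (minb x Cx Bx)).
exists mb => // x Cx; case: (CAB x Cx) => [Ax|]; last exact: minb.
exact: (oag_trans HG ba (mina x Cx Ax)).
Qed.

Lemma wo_well_founded (A : set G) : well_ordered le A ->
  well_founded (fun h g => A h /\ lt h g).
Proof.
move=> WA g; apply: contrapT => nacc.
pose R h g := A h /\ lt h g.
have bad_ne : [set h | A h /\ ~ Acc R h] !=set0.
  apply: contrapT => none; apply: nacc; constructor=> h [Ah _].
  by apply: contrapT => nAh; apply: none; exists h.
have [m [Am nAm] mmin] := WA _ (fun h => @proj1 _ _) bad_ne.
apply: nAm; constructor=> h [Ah hm]; apply: contrapT => nAh.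
exact: (ltG_nle HG hm (mmin h (conj Ah nAh))).
Qed.

Lemma wo_nondecr_subseq (A : set G) (a : nat -> G) :
  well_ordered le A -> (forall n, A (a n)) -> exists phi : nat -> nat,
  (forall i, (phi i < phi i.+1)%N) /\ (forall i, le (a (phi i)) (a (phi i.+1))).
Proof.
move=> WA Aa.
have tail_min n : exists j, (n <= j)%N /\ forall j', (n <= j')%N -> le (a j) (a j').
  have sub : a @` [set j | (n <= j)%N] `<=` A by move=> _ [j _ <-].
  have [_ [j nj <-] jmin] := WA _ sub (ex_intro _ (a n) (ex_intro2 _ _ n (leqnn n) erefl)).
  by exists j; split=> // j' nj'; apply: jmin; exists j'.
have [mf mfP] := choice tail_min.
pose st := fix st i := if i is i'.+1 then (mf (st i')).+1 else 0%N.
exists (fun i => mf (st i)); split=> i; first exact: (mfP (st i.+1)).1.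
by apply: (mfP (st i)).2; apply: leq_trans (mfP (st i)).1 (ltnW (mfP (st i.+1)).1).
Qed.

End WellOrdered.

Section Neumann.
Variables (G : zmodType) (le : G -> G -> Prop).
Hypothesis HG : ordered_abelian_group le.
Local Notation lt := (ltG le).
Variable S : set G.

Inductive nsums : nat -> set G :=
| nsums0 : nsums 0 0
| nsumsS n s t : S s -> nsums n t -> nsums n.+1 (s + t).

Definition sums : set G := [set g | exists n, nsums n.+1 g].

Lemma nsumsP n g : nsums n g ->
  if n is m.+1 then exists2 s, S s & exists2 t, nsums m t & g = s + t else g = 0.
Proof. by case=> // m s t Ss Nt; exists s => //; exists t. Qed.

Lemma nsumsD n m t u : nsums n t -> nsums m u -> nsums (n + m) (t + u).
Proof.
elim=> [|n' s t' Ss _ IH] Nu; first by rewrite add0n add0r.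
by rewrite addSn -addrA; apply: nsumsS => //; apply: IH.
Qed.

Hypothesis S_gt0 : forall s, S s -> lt 0 s.

Lemma nsums_gt0 n g : nsums n.+1 g -> lt 0 g.
Proof.
elim: n g => [|n IH] g /nsumsP [s /S_gt0 s0 [t Nt ->]].
  by move/nsumsP: Nt => ->; rewrite addr0.
exact: (ltG0D HG s0 (IH _ Nt)).
Qed.

Lemma sums_gt0 g : sums g -> lt 0 g.
Proof. by case=> n /nsums_gt0. Qed.

Hypothesis S_wo : well_ordered le S.

(* A pair [(t, L)] records that [t] is a sum of [L] elements of [S].  Bad
   sequences capture both ways Neumann's lemma could fail: a strictly
   decreasing sequence in [sums], or one element with unboundedly long
   representations. *)
Definition descent (x y : G * nat) := le y.1 x.1 /\ (lt y.1 x.1 \/ (x.2 < y.2)%N).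

Definition bad (s : nat -> G * nat) :=
  forall n, nsums (s n).2 (s n).1 /\ descent (s n) (s n.+1).

Definition starts_bad (x : G * nat) := exists2 s, s 0%N = x & bad s.

Lemma descent_trans x y z : descent x y -> descent y z -> descent x z.
Proof.
move=> [yx xy] [zy yz]; split; first exact: (oag_trans HG zy yx).
case: xy => [xy|xy]; first by left; exact: (leG_ltG_trans HG zy xy).
by case: yz => [yz|yz]; [left; exact: (ltG_leG_trans HG yz yx)|right; exact: ltn_trans yz].
Qed.

Lemma bad_descent s m n : bad s -> (m < n)%N -> descent (s m) (s n).
Proof.
move=> bs; elim: n => // n IH; rewrite ltnS leq_eqVlt => /orP[/eqP-> | /IH mn].
  exact: (bs n).2.
exact: descent_trans mn (bs n).2.
Qed.

Lemma bad_len_gt0 s n : bad s -> (0 < (s n).2)%N.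
Proof.
move=> bs; have [Nn [le1 lt1]] := bs n; have [Nn1 _] := bs n.+1.
case: (s n) Nn le1 lt1 => t [|//] /nsumsP /= -> le1.
case: (s n.+1) Nn1 le1 => t' [/nsumsP -> _ [/ltG_irr//|//]|L' /nsums_gt0 t'0 le1 _].
by have := ltG_nle HG t'0 le1.
Qed.

Lemma starts_bad_next x : starts_bad x -> exists2 y, descent x y & starts_bad y.
Proof.
case=> s <- bs; exists (s 1%N); first exact: (bs 0%N).2.
by exists (fun n => s n.+1) => // n; apply: bs.
Qed.

Lemma minimal_bad s : bad s -> exists p, bad p /\
  forall n y, descent (p n) y -> starts_bad y -> ((p n.+1).2 <= y.2)%N.
Proof.
move=> bs.
have next x : exists y, starts_bad x -> [/\ descent x y, starts_bad y &
    forall y', descent x y' -> starts_bad y' -> (y.2 <= y'.2)%N].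
  have [/starts_bad_next ex|] := pselect (starts_bad x); last by exists x.
  pose P L := `[< exists t, descent x (t, L) /\ starts_bad (t, L) >].
  have [|L /asboolP [t [xt bt]] Lmin] := ex_minnP (P := P).
    by case: ex => -[t L] xy by_; exists L; apply/asboolP; exists t.
  exists (t, L) => _; split=> // -[t' L'] xy' by'; apply: Lmin; apply/asboolP.
  by exists t'.
have [f fP] := choice next.
pose p n := iter n f (s 0%N).
have sp n : starts_bad (p n).
  by elim: n => [|n IH]; [exists s | have [] := fP _ IH].
exists p; split; last by move=> n y; have [_ _] := fP _ (sp n); apply.
move=> n; split; last by have [] := fP _ (sp n).
by have [s' <- bs'] := sp n; apply: (bs' 0%N).1.
Qed.

Lemma descent_cancel a r L a' r' L' : le a a' -> (0 < L)%N ->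
  descent (a + r, L) (a' + r', L') -> descent (r, L.-1) (r', L'.-1).
Proof.
move=> aa' L0 [/= le1 lt1].
have le2 : le (a + r') (a + r).
  exact: (oag_trans HG (leGD2r HG r' aa') le1).
split=> /=; first exact: (leGD2lK HG le2).
case: lt1 => [lt1|LL']; last by right; rewrite -ltnS !prednK // (leq_trans L0 (ltnW LL')).
left; apply: (ltGD2lK HG (z := a)).
exact: (leG_ltG_trans HG (leGD2r HG r' aa') lt1).
Qed.

(* Nash-Williams' argument: remove the first summands along a subsequence on
   which they are nondecreasing; the remainders form a bad sequence starting
   strictly below [p m] with a shorter representation than [p m.+1]. *)
Theorem no_bad s : ~ bad s.
Proof.
move=> /minimal_bad [p [bp pmin]].
have split_next n : exists ar : G * G, [/\ S ar.1, nsums (p n.+1).2.-1 ar.2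
    & (p n.+1).1 = ar.1 + ar.2].
  have := (bp n.+1).1; case: (p n.+1).2 (bad_len_gt0 n.+1 bp) => // L _.
  by move/nsumsP=> [a Sa [r Nr ->]]; exists (a, r).
have [ar arP] := choice split_next.
have S_ar n : S (ar n).1 by case: (arP n).
have [phi [phi_incr a_mono]] := wo_nondecr_subseq S_wo S_ar.
pose u j := ((ar (phi j)).2, (p (phi j).+1).2.-1).
have bu : bad u.
  move=> j; split; first by case: (arP (phi j)).
  apply: descent_cancel (a_mono j) (bad_len_gt0 _ bp) _.
  have [_ _ <-] := arP (phi j); have [_ _ <-] := arP (phi j.+1).
  by case: (p _) (bad_descent bp (phi_incr j : ((phi j).+1 < (phi j.+1).+1)%N)).
set m := phi 0%N.
have desc_m : descent (p m) (u 0%N).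
  have [_ _ pE] := arP m; have [le1 _] := (bp m).2.
  have ltu : lt (u 0%N).1 (p m).1.
    apply: (ltG_leG_trans HG _ le1); rewrite pE; exact: (ltGDl HG _ (S_gt0 (S_ar m))).
  by split; [exact: ltu.1 | left].
have := pmin m _ desc_m (ex_intro2 _ _ u erefl bu).
by rewrite /= -ltnS prednK ?ltnn // (bad_len_gt0 _ bp).
Qed.

Theorem sums_wo : well_ordered le sums.
Proof.
move=> B Bsums [b0 Bb0]; apply: contrapT => nomin.
have smaller x : exists y, B x -> B y /\ lt y x.
  have [Bx|] := pselect (B x); last by exists x.
  have /existsNP [y /not_implyP [By nxy]] : ~ forall y, B y -> le x y.
    by move=> xmin; apply: nomin; exists x.
  by exists y => _; split=> //; apply: (nleG_ltG HG).
have [f fP] := choice smaller.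
pose t n := iter n f b0.
have Bt n : B (t n) by elim: n => // n IH; apply: (fP _ IH).1.
have [L LP] := choice (fun n => Bsums _ (Bt n)).
apply: (@no_bad (fun n => (t n, (L n).+1))) => n; split; first exact: LP.
by have [_ lt1] := fP _ (Bt n); split; [exact: lt1.1 | left].
Qed.

Theorem nsums_bounded g : exists N, forall n, nsums n g -> (n <= N)%N.
Proof.
apply: contrapT => /forallNP unbounded.
have longer N : exists n, (N < n)%N /\ nsums n g.
  have /existsNP [n /not_implyP [Ng nle]] := unbounded N.
  by exists n; rewrite ltnNge; split=> //; apply/negP.
have [f fP] := choice longer.
apply: (@no_bad (fun i => (g, iter i.+1 f 0%N))) => i; split; first exact: (fP _).2.
by split; [exact: (oag_refl HG) | right; exact: (fP _).1].
Qed.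

End Neumann.

Lemma sums_nsums (G : zmodType) (S S' : set G) n g :
  S' `<=` sums S -> nsums S' n.+1 g -> sums S g.
Proof.
move=> S'S; elim: n g => [|n IH] g /nsumsP [s /S'S [a Na] [t Nt ->]].
  by move/nsumsP: Nt => ->; rewrite addr0; exists a.
have [b Nb] := IH _ Nt; exists (a + b.+1)%N.
by rewrite -addSn; apply: nsumsD.
Qed.

Lemma fsum_ge_trunc (R : zmodType) (F : nat -> R) m N :
  (forall i, (N < i)%N -> F i = 0) ->
  \sum_(i \in [set i | (m <= i)%N]) F i = \sum_(m <= i < N.+1) F i.
Proof.
move=> FN; rewrite -(fsbig_widen [set i | (m <= i <= N)%N]).
- rewrite (fsbig_fwiden (index_iota m N.+1)) ?iota_uniq //.
    by move=> i /= iN; rewrite mem_index_iota ltnS.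
  by move=> i [/=]; rewrite mem_index_iota ltnS.
- by move=> i /= /andP[].
- by move=> i [/= mi]; rewrite mi /= => /negP; rewrite -ltnNge => /FN.
Qed.

Lemma fsum_ge1_split (R : zmodType) (F : nat -> R) N :
  (forall i, (N < i)%N -> F i = 0) ->
  \sum_(i \in [set i | (1 <= i)%N]) F i = F 1%N + \sum_(i \in [set i | (2 <= i)%N]) F i.
Proof.
move=> FN; have FN1 i : (N.+1 < i)%N -> F i = 0 by move=> /ltnW; apply: FN.
by rewrite !(fsum_ge_trunc _ FN1) big_ltn.
Qed.

Section HahnPowers.
Variables (k : fieldType) (G : zmodType) (le : G -> G -> Prop).
Hypothesis HG : ordered_abelian_group le.
Local Notation lt := (ltG le).

Definition supp_gt0 (y : G -> k) := forall g, y g != 0 -> lt 0 g.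

Definition agree_below (m : G) (y y' : G -> k) := forall h, lt h m -> y h = y' h.

Lemma hmulr1 (a : G -> k) : hmul a (@hone k G) = a.
Proof.
apply/funext => g; rewrite /hmul -(fsbig_widen [set g]) ?fsbig_set1 //.
  by rewrite subrr /hone eqxx mulr1.
move=> h [_ /= ngh]; rewrite /hone ifF ?mulr0 //.
by apply/negbTE; rewrite subr_eq0; apply/eqP => /esym.
Qed.

Lemma hpow1 (a : G -> k) : hpow a 1 = a.
Proof. exact: hmulr1. Qed.

Lemma hmul_neq0 (a b : G -> k) g : hmul a b g != 0 ->
  exists2 h, a h != 0 & b (g - h) != 0.
Proof.
move=> /(fsbigN1 (f := fun _ h => a h * b (g - h)) (x := tt)) [h _].
by rewrite mulf_eq0 negb_or => /andP[]; exists h.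
Qed.

Lemma supp_hpow (y : G -> k) n g : hpow y n g != 0 -> nsums (supp y) n g.
Proof.
elim: n g => [|n IH] g /=.
  by rewrite /hone; case: (eqVneq g 0) => [->|]; [constructor | rewrite eqxx].
move=> /hmul_neq0 [h yh /IH Nh].
by rewrite -(subrK h g) addrC; apply: nsumsS.
Qed.

Lemma hpow_gt0 (y : G -> k) n : supp_gt0 y -> supp_gt0 (hpow y n.+1).
Proof. by move=> y0 g /supp_hpow /(nsums_gt0 HG y0). Qed.

Lemma hmul_agree (y y' p p' : G -> k) m g : supp_gt0 y -> supp_gt0 y' ->
  supp_gt0 p' -> agree_below m y y' -> agree_below m p p' -> le g m ->
  hmul y p g = hmul y' p' g.
Proof.
move=> y0 y'0 p'0 yy' pp' gm; apply: eq_fsbigr => h _.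
have [h0|nh0] := pselect (lt 0 h); last first.
  have yh0 (z : G -> k) : supp_gt0 z -> z h = 0.
    by move=> z0; apply/eqP; apply: contraT => /z0.
  by rewrite (yh0 _ y0) (yh0 _ y'0) !mul0r.
have ghm : lt (g - h) m.
  by apply: (ltG_leG_trans HG _ gm); have := ltGDl HG (g - h) h0; rewrite [h + _]addrC subrK.
rewrite (pp' _ ghm); have [->|/p'0 gh0] := eqVneq (p' (g - h)) 0; first by rewrite !mulr0.
have hg : lt h g by have := ltGDl HG h gh0; rewrite subrK.
by rewrite yy' //; apply: (ltG_leG_trans HG hg gm).
Qed.

Section Agree.
Variables (y y' : G -> k) (m : G).
Hypotheses (y0 : supp_gt0 y) (y'0 : supp_gt0 y') (yy' : agree_below m y y').

Lemma hpow_agree n : agree_below m (hpow y n.+1) (hpow y' n.+1).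
Proof.
elim: n => [|n IH]; first by rewrite !hpow1.
move=> g [gm _]; change (hmul y (hpow y n.+1) g = hmul y' (hpow y' n.+1) g).
exact: (hmul_agree y0 y'0 (hpow_gt0 y'0) yy' IH gm).
Qed.

Lemma hpow_agree_at n : hpow y n.+2 m = hpow y' n.+2 m.
Proof.
change (hmul y (hpow y n.+1) m = hmul y' (hpow y' n.+1) m).
exact: (hmul_agree y0 y'0 (hpow_gt0 y'0) yy' (hpow_agree n) (oag_refl HG m)).
Qed.

End Agree.

Lemma hpow_eventually0 (y : G -> k) g : well_ordered le (supp y) -> supp_gt0 y ->
  exists N, forall i, (N < i)%N -> hpow y i g = 0.
Proof.
move=> y_wo y0; have [N NP] := nsums_bounded HG y0 y_wo g.
exists N => i Ni; apply/eqP; apply: contraT => /supp_hpow /NP.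
by rewrite leqNgt Ni.
Qed.

Variable c : nat -> k.

Definition psmap_tail (y : G -> k) g := \sum_(i \in [set i : nat | (2 <= i)%N]) c i * hpow y i g.

Lemma psmap_tail_agree (y y' : G -> k) m : supp_gt0 y -> supp_gt0 y' ->
  agree_below m y y' -> psmap_tail y m = psmap_tail y' m.
Proof.
move=> y0 y'0 yy'; apply: eq_fsbigr => -[|[|i]]; rewrite inE // => _.
by rewrite (hpow_agree_at y0 y'0 yy').
Qed.

Lemma psmap_agree (y y' : G -> k) m : supp_gt0 y -> supp_gt0 y' ->
  agree_below m y y' -> agree_below m (psmap c y) (psmap c y').
Proof.
move=> y0 y'0 yy' g gm; apply: eq_fsbigr => -[|i]; rewrite inE // => _.
by rewrite (hpow_agree y0 y'0 yy').
Qed.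

Lemma psmap_split (y : G -> k) g : Defs.valM le y -> psmap c y g = c 1%N * y g + psmap_tail y g.
Proof.
case=> y_wo y0; have [N NP] := hpow_eventually0 g y_wo y0.
rewrite /psmap (@fsum_ge1_split _ _ N) ?hpow1 // => i /NP ->; exact: mulr0.
Qed.

Lemma psmap_supp (y : G -> k) g : psmap c y g != 0 -> sums (supp y) g.
Proof.
move=> /(fsbigN1 (f := fun _ i => c i * hpow y i g) (x := tt)) [[|i] // _].
by rewrite mulf_eq0 negb_or => /andP[_ /supp_hpow Ni]; exists i.
Qed.

Lemma psmap_valM (y : G -> k) : Defs.valM le y -> Defs.valM le (psmap c y).
Proof.
case=> y_wo y0; split; last by move=> g /psmap_supp /(sums_gt0 HG y0).
exact: (wo_sub (fun g => @psmap_supp y g) (sums_wo HG y0 y_wo)).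
Qed.

Lemma hval_eq (a : G -> k) m : is_val le a m -> hval le a = m.
Proof.
move=> am; apply: xget_unique => // m' [a_m' m'min].
by apply: (oag_anti HG); [apply: m'min; case: am | apply: am.2].
Qed.

Lemma hsub_is_val (y z : G -> k) : hahn le y -> hahn le z -> y <> z ->
  exists m, is_val le (hsub y z) m.
Proof.
move=> y_wo z_wo yz.
have sub : supp (hsub y z) `<=` supp y `|` supp z.
  move=> g; rewrite /supp /hsub /=; have [->|] := eqVneq (y g) 0; last by left.
  by rewrite sub0r oppr_eq0; right.
have ne : supp (hsub y z) !=set0.
  apply: contrapT => none; apply: yz; apply/funext => g; apply/eqP; rewrite -subr_eq0.
  by apply: contrapT => /negP yzg; apply: none; exists g.
have [m ym mmin] := wo_sub sub (wo_setU HG y_wo z_wo) (@subset_refl _ _) ne.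
by exists m; split.
Qed.

Lemma is_val_agree (y z : G -> k) m : is_val le (hsub y z) m -> agree_below m y z.
Proof.
move=> [_ mmin] h hm; apply/eqP; rewrite -subr_eq0; apply: contrapT => /negP yzh.
exact: (ltG_nle HG hm (mmin h yzh)).
Qed.

Hypothesis hc1 : c 1%N != 0.

Lemma psmapB_is_val (y z : G -> k) m : Defs.valM le y -> Defs.valM le z ->
  is_val le (hsub y z) m -> is_val le (hsub (psmap c y) (psmap c z)) m.
Proof.
move=> vy vz ym; have yz := is_val_agree ym.
have [[_ y0] [_ z0]] := (vy, vz).
split.
  rewrite /hsub !psmap_split // (psmap_tail_agree y0 z0 yz) opprD addrACA subrr addr0.
  by rewrite -mulrBr mulf_neq0 //; case: ym.
move=> h; apply: contraNP => /(nleG_ltG HG) hm.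
by rewrite /hsub (psmap_agree y0 z0 yz hm) subrr.
Qed.

Lemma hval_psmapB (y z : G -> k) : Defs.valM le y -> Defs.valM le z -> y <> z ->
  hval le (hsub (psmap c y) (psmap c z)) = hval le (hsub y z).
Proof.
move=> vy vz yz; have [m ym] := hsub_is_val vy.1 vz.1 yz.
by rewrite (hval_eq ym) (hval_eq (psmapB_is_val vy vz ym)).
Qed.

Lemma psmap_inj : set_inj (Defs.valM le) (psmap c).
Proof.
move=> y z /[!inE] vy vz fyz; apply: contrapT => yz.
have [m ym] := hsub_is_val vy.1 vz.1 yz.
by have [] := psmapB_is_val vy vz ym; rewrite fyz /hsub subrr eqxx.
Qed.

Section Inverse.
Variable z : G -> k.
Hypothesis z_valM : Defs.valM le z.

(* Recursion y_g := (z_g - psmap_tail y g) / c_1, whose right-hand side only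
   involves the coefficients of y below g. *)
Let T := sums (supp z).
Let below h g := T h /\ lt h g.

Let below_wf : well_founded below.
Proof. by case: z_valM => z_wo z0; apply: (wo_well_founded HG (sums_wo HG z0 z_wo)). Qed.

Let step (g : G) (rec : forall h, below h g -> k) : k :=
  let yg h := match pselect (below h g) with left bhg => rec h bhg | right _ => 0 end in
  if pselect (T g) then (z g - psmap_tail yg g) / c 1%N else 0.

Definition psinv : G -> k := Fix below_wf (fun _ => k) step.

Let trunc g h : k := match pselect (below h g) with left _ => psinv h | right _ => 0 end.

Let psinv_eq g : psinv g = if pselect (T g) then (z g - psmap_tail (trunc g) g) / c 1%N else 0.
Proof.
rewrite {1}/psinv Fix_eq; last first.
  move=> x f f' ff'; rewrite /step.
  suff -> : (fun h => match pselect (below h x) with left p => f h p | right _ => 0 end) =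
            (fun h => match pselect (below h x) with left p => f' h p | right _ => 0 end) by [].
  by apply/funext => h; case: pselect.
(* Unfold first: [reflexivity] on the folded goal diverges unfolding [Fix]. *)
by rewrite /step /trunc /psinv; exact: erefl.
Qed.

Let psinv_supp g : psinv g != 0 -> T g.
Proof. by rewrite psinv_eq; case: (pselect (T g)) => //= _; rewrite eqxx. Qed.

Let psinv_gt0 : supp_gt0 psinv.
Proof. by case: z_valM => _ z0 g /psinv_supp /(sums_gt0 HG z0). Qed.

Let trunc_gt0 g : supp_gt0 (trunc g).
Proof. by move=> h; rewrite /trunc; case: pselect => [_ /psinv_gt0 //|]; rewrite eqxx. Qed.

Let trunc_agree g : agree_below g (trunc g) psinv.
Proof.
move=> h hg; rewrite /trunc; case: pselect => // nbelow.
by apply/esym/eqP; apply: contraT => /psinv_supp Th; case: nbelow.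
Qed.

Let psinv_coef g : T g -> c 1%N * psinv g = z g - psmap_tail psinv g.
Proof.
move=> Tg; rewrite psinv_eq; case: (pselect (T g)) => //= _.
by rewrite (psmap_tail_agree (@trunc_gt0 g) psinv_gt0 (@trunc_agree g)) mulrC divfK.
Qed.

Lemma psinv_valM : Defs.valM le psinv.
Proof.
case: z_valM => z_wo z0; split; last exact: psinv_gt0.
exact: (wo_sub psinv_supp (sums_wo HG z0 z_wo)).
Qed.

Lemma psmap_psinv : psmap c psinv = z.
Proof.
apply/funext => g; rewrite (psmap_split _ psinv_valM).
have [Tg|nTg] := pselect (T g); first by rewrite psinv_coef // subrK.
have -> : psinv g = 0 by apply/eqP; apply: contraT => /psinv_supp.
have -> : z g = 0.
  apply/eqP; apply: contraT => zg; case: nTg; exists 0%N.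
  by rewrite -[g]addr0; apply: nsumsS => //; constructor.
rewrite mulr0 add0r /psmap_tail fsbig1 // => -[|[|i]] // _.
apply/eqP; rewrite mulf_eq0; apply/orP; right; apply: contraT.
by move=> /supp_hpow /(sums_nsums psinv_supp) /nTg.
Qed.

End Inverse.

Lemma psmap_surj : set_surj (Defs.valM le) (Defs.valM le) (psmap c).
Proof. by move=> z vz; exists (psinv vz); [exact: psinv_valM | exact: psmap_psinv]. Qed.

End HahnPowers.

Theorem theorem32 (k : fieldType) (G : zmodType) (le : G -> G -> Prop)
  (HG : ordered_abelian_group le) (c : nat -> k) (hc1 : c 1%N != 0%R) :
  ultrametric_iso le (psmap (G:=G) c).
Proof.
split; first by split; [exact: psmap_valM | exact: psmap_inj | exact: psmap_surj].
exists id; split=> [_ [s vs <-] //|//|y z vy vz yz].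
exact: hval_psmapB.
Qed.
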